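(* The $G$-invariant functions $p_1,\dots,p_5$ on $\mathscr X_2$ given by $p_1(v,w,C)=\langle v,v\rangle$, $p_2(v,w,C)=\langle w,w\rangle$, $p_3(v,w,C)=\langle Cv,w\rangle$, $p_4(v,w,C)=\operatorname{tr}(C^tC)$, $p_5(v,w,C)=\det C$ separate orbits in general position.
   Context: Identify $V_1=V_2=\mathbb C^2$ with Pauli matrices $\sigma_1=\begin{pmatrix}0&1\\1&0\end{pmatrix}$, $\sigma_2=\begin{pmatrix}0&-i\\i&0\end{pmatrix}$, $\sigma_3=\begin{pmatrix}1&0\\0&-1\end{pmatrix}$. Trace-one endomorphisms of $\mathbb C^2\otimes\mathbb C^2$ are written uniquely as $\tfrac14\big(I\otimes I+\sum_a v_a\sigma_a\otimes I+\sum_b w_bI\otimes\sigma_b+\sum_{a,b}C_{ba}\sigma_a\otimes\sigma_b\big)$, giving coordinates $(v,w,C)\in\mathbb C^3\times\mathbb C^3\times M_3(\mathbb C)$ on the space $\mathscr L_2$; $G=\mathrm{SO}_3(\mathbb C)^2$ acts by $(g_1,g_2)\cdot(v,w,C)=(g_1v,g_2w,g_2Cg_1^{-1})$. $\langle x,y\rangle=\sum_a x_ay_a$ on $\mathbb C^3$. Let $X_0$ be the subspace with $v_1=v_2=w_1=w_2=0$ and $C_{ba}=0$ whenever exactly one of $a,b$ equals $3$; $\mathscr X_2$ is the Zariski closure of $G\cdot X_0$ (equivalently of the set of two-qubit X-states), with reduced structure. A collection $f_1,\dots,f_m$ of $G$-invariant rational functions on a $G$-variety $X$ separates orbits in general position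 if there is a dense Zariski-open $U\subseteq X$ such that any $x_1,x_2\in U$ with $f_i(x_1)=f_i(x_2)$ for all $i$ lie in the same $G$-orbit. *)

From HB Require Import structures.
From mathcomp Require Import all_boot all_order all_algebra.
From mathcomp Require Import complex.
From mathcomp Require Import reals.
From mathcomp Require mpoly.
Set Implicit Arguments. Unset Strict Implicit. Unset Printing Implicit Defensive.
Import Order.TTheory GRing.Theory Num.Theory.
Local Open Scope ring_scope.

Section Defs.
Variable R : realType.
Local Notation C := (complex R).

Definition pt := ('cV[C]_3 * 'cV[C]_3 * 'M[C]_3)%type.
Definition pv (x : pt) := x.1.1.
Definition pw (x : pt) := x.1.2.
Definition pC (x : pt) := x.2.

Definition coords (x : pt) (i : 'I_15) : C :=
  if (i < 3)%N then pv x (inord i) 0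
  else if (i < 6)%N then pw x (inord (i - 3)) 0
  else pC x (inord ((i - 6) %/ 3)) (inord ((i - 6) %% 3)).

Definition zariski_closed (Z : pt -> Prop) : Prop :=
  exists P : mpoly.mpoly 15 C -> Prop,
    forall x, Z x <-> (forall p, P p -> mpoly.meval (coords x) p = 0).

Definition zclosure (S : pt -> Prop) (x : pt) : Prop :=
  forall Z, zariski_closed Z -> (forall y, S y -> Z y) -> Z x.

Definition SO3 (g : 'M[C]_3) : Prop := g^T *m g = 1%:M /\ \det g = 1.
Definition inG (g : 'M[C]_3 * 'M[C]_3) : Prop := SO3 g.1 /\ SO3 g.2.

Definition act (g : 'M[C]_3 * 'M[C]_3) (x : pt) : pt :=
  (g.1 *m pv x, g.2 *m pw x, g.2 *m pC x *m invmx g.1).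

Definition bil (x y : 'cV[C]_3) : C := \sum_(a < 3) x a 0 * y a 0.

(* X_0 (indices 0,1,2 stand for 1,2,3) *)
Definition X0 (x : pt) : Prop :=
  pv x 0 0 = 0 /\ pv x 1 0 = 0 /\ pw x 0 0 = 0 /\ pw x 1 0 = 0 /\
  (forall a b : 'I_3, ((a == 2 :> nat) != (b == 2 :> nat)) -> pC x b a = 0).

Definition X2 : pt -> Prop :=
  zclosure (fun y => exists g x, inG g /\ X0 x /\ y = act g x).

Definition pinv (i : 'I_5) (x : pt) : C :=
  match val i with
  | 0 => bil (pv x) (pv x)
  | 1 => bil (pw x) (pw x)
  | 2 => bil (pC x *m pv x) (pw x)
  | 3 => \tr ((pC x)^T *m pC x)
  | _ => \det (pC x)
  end.

(* A family f of G-invariant functions on a G-stable X separates orbits in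
   general position: there is a dense Zariski-open U of X (U = X minus a
   Zariski-closed Z, with X contained in the closure of U) on which equal
   values of all f_i imply being in the same G-orbit. *)
Definition separates_orbits_gp (n : nat) (f : 'I_n -> pt -> C)
  (X : pt -> Prop) : Prop :=
  exists Z : pt -> Prop, zariski_closed Z /\
    (forall x, X x -> zclosure (fun y => X y /\ ~ Z y) x) /\
    (forall x1 x2, X x1 -> ~ Z x1 -> X x2 -> ~ Z x2 ->
       (forall i, f i x1 = f i x2) -> exists g, inG g /\ act g x1 = x2).

Definition G_invariant_on (n : nat) (f : 'I_n -> pt -> C) (X : pt -> Prop) :=
  forall g x i, inG g -> X x -> f i (act g x) = f i x.
End Defs.

From mathcomp Require Import all_boot all_algebra complex reals ring.
From mathcomp Require Import mpoly.
Set Implicit Arguments. Unset Strict Implicit. Unset Printing Implicit Defensive.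
Import GRing.Theory Num.Theory.
Local Open Scope ring_scope.

(* Besides the five invariants, X_2 satisfies the G-equivariant equations
   "Cv is parallel to w and C^T w is parallel to v".  Where <v,v> and <w,w> do
   not vanish, reflections move v and w onto the third axis, and these
   equations then force C to be block diagonal: the point is an X-state.  On
   X-states the rotations about the third axis act on the upper 2x2 block of C
   by rotating its conformal part by the angle theta_w - theta_v and its
   anticonformal part by theta_w + theta_v; since complex plane rotations act
   transitively on the level sets {a^2 + b^2 = k}, k <> 0, equal invariants
   give a common orbit.  All the nondegeneracy conditions used are encoded in
   one polynomial in the invariants, the discriminant; its zero set is Zariski
   closed, and it does not contain X_2 because it meets each line
   x + t (e_3, e_3, diag(2, 0, 1)) through an X-state only finitely often. *)

Lemma ord3_ind (P : 'I_3 -> Prop) : P 0 -> P 1 -> P 2 -> forall i, P i.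
Proof.
by move=> P0 P1 P2 [[|[|[|//]]] ?]; [move: P0 | move: P1 | move: P2]; congr P; apply: val_inj.
Qed.

Lemma ord1_ind (P : 'I_1 -> Prop) : P 0 -> forall i, P i.
Proof. by move=> P0 i; rewrite (ord1 i). Qed.

Lemma sum3 (V : nmodType) (F : 'I_3 -> V) : \sum_(i < 3) F i = F 0 + F 1 + F 2.
Proof.
by rewrite !big_ord_recl big_ord0 addr0 addrA; congr (F _ + F _ + F _); apply: val_inj.
Qed.

Lemma eq_of_subr_mul (T : pzRingType) (a b c d : T) : a - b = c * d -> d = 0 -> a = b.
Proof. by move=> eq_ab d0; apply/eqP; rewrite -subr_eq0 eq_ab d0 mulr0. Qed.

Section ThreeByThree.
Variable T : comNzRingType.

Definition mk3 (a00 a01 a02 a10 a11 a12 a20 a21 a22 : T) : 'M[T]_3 :=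
  \matrix_(i, j) nth 0 (nth [::] [:: [:: a00; a01; a02]; [:: a10; a11; a12];
                                    [:: a20; a21; a22]] i) j.

Definition cv3 (a0 a1 a2 : T) : 'cV[T]_3 := \col_i nth 0 [:: a0; a1; a2] i.

Lemma tr3E (A : 'M[T]_3) : \tr A = A 0 0 + A 1 1 + A 2 2.
Proof. by rewrite /mxtrace sum3. Qed.

Lemma det3E (A : 'M[T]_3) : \det A =
  A 0 0 * A 1 1 * A 2 2 - A 0 0 * A 1 2 * A 2 1 - A 0 1 * A 1 0 * A 2 2
  + A 0 1 * A 1 2 * A 2 0 + A 0 2 * A 1 0 * A 2 1 - A 0 2 * A 1 1 * A 2 0.
Proof.
pose F (i j : nat) := A (inord i) (inord j).
have -> : A = \matrix_(i, j) F i j by apply/matrixP=> i j; rewrite mxE /F !inord_val.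
rewrite (expand_det_row _ 0) !big_ord_recr big_ord0 /=.
rewrite /cofactor !(expand_det_row _ 0) !big_ord_recr !big_ord0 /=.
by rewrite /cofactor !det_mx11 !mxE /= /bump /= !expr0 !expr1 /=; ring.
Qed.

Definition dot (x y : 'cV[T]_3) : T := \sum_(a < 3) x a 0 * y a 0.

Lemma dotE x y : dot x y = x 0 0 * y 0 0 + x 1 0 * y 1 0 + x 2 0 * y 2 0.
Proof. by rewrite /dot sum3. Qed.

Lemma dot_orth (g : 'M[T]_3) x y : g^T *m g = 1%:M -> dot (g *m x) (g *m y) = dot x y.
Proof.
have dot_trmx u z : dot u z = (u^T *m z) 0 0.
  by rewrite mxE; apply: eq_bigr => a _; rewrite mxE.
by move=> gTg; rewrite !dot_trmx trmx_mul -mulmxA (mulmxA g^T) gTg mul1mx.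
Qed.

Definition pinv3 (i : 'I_5) (v w : 'cV[T]_3) (M : 'M[T]_3) : T :=
  match val i with
  | 0 => dot v v
  | 1 => dot w w
  | 2 => dot (M *m v) w
  | 3 => \tr (M^T *m M)
  | _ => \det M
  end.

(* Chosen so that on X-states it equals 16 e^3 (s r)^9 (a^2 + b^2) (c^2 + d^2)
   ([disc_nf]), the product of everything the normal form argument divides by. *)
Definition disc_of (p : 'I_5 -> T) : T :=
  p 0 * p 1 * p 2 *
  (p 2 ^+ 2 * (p 0 * p 1 * p 3 - p 2 ^+ 2) ^+ 2 - 4%:R * p 4 ^+ 2 * (p 0 * p 1) ^+ 3).

Definition disc v w M := disc_of (fun i => pinv3 i v w M).

Definition covw (v w : 'cV[T]_3) (M : 'M[T]_3) : 'cV[T]_3 :=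
  dot w w *: (M *m v) - dot (M *m v) w *: w.

Definition covv (v w : 'cV[T]_3) (M : 'M[T]_3) : 'cV[T]_3 :=
  dot v v *: (M^T *m w) - dot (M *m v) w *: v.

Lemma covw_orth (g1 g2 : 'M[T]_3) v w M : g1^T *m g1 = 1%:M -> g2^T *m g2 = 1%:M ->
  covw (g1 *m v) (g2 *m w) (g2 *m M *m g1^T) = g2 *m covw v w M.
Proof.
move=> g1O g2O; rewrite /covw -!mulmxA (mulmxA g1^T) g1O mul1mx !dot_orth //.
by rewrite mulmxBr -!scalemxAr.
Qed.

Lemma covv_orth (g1 g2 : 'M[T]_3) v w M : g1^T *m g1 = 1%:M -> g2^T *m g2 = 1%:M ->
  covv (g1 *m v) (g2 *m w) (g2 *m M *m g1^T) = g1 *m covv v w M.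
Proof.
move=> g1O g2O; rewrite /covv !trmx_mul trmxK -!mulmxA (mulmxA g2^T) g2O mul1mx.
by rewrite (mulmxA g1^T) g1O mul1mx !dot_orth // mulmxBr -!scalemxAr.
Qed.

End ThreeByThree.

Ltac mx3E := rewrite ?(dotE, tr3E, det3E, sum3, big_ord1, mxE) /=.
Ltac mx3_entrywise :=
  apply/matrixP; apply: ord3_ind; first [apply: ord3_ind | apply: ord1_ind].

Section RingMorphism.
Variables (T S : comNzRingType) (f : {rmorphism T -> S}).
Local Notation "A ^f" := (map_mx f A) : ring_scope.

Lemma dot_map x y : f (dot x y) = dot x^f y^f.
Proof. by rewrite /dot rmorph_sum; apply: eq_bigr => a _; rewrite rmorphM !mxE. Qed.

Lemma pinv3_map i v w M : f (pinv3 i v w M) = pinv3 i v^f w^f M^f.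
Proof.
rewrite /pinv3; case: (val i) => [|[|[|[|?]]]]; rewrite ?dot_map ?map_mxM //.
- by rewrite -trace_map_mx map_mxM map_trmx.
- by rewrite det_map_mx.
Qed.

Lemma disc_map v w M : f (disc v w M) = disc v^f w^f M^f.
Proof. by rewrite /disc /disc_of !(rmorphM, rmorphB, rmorphXn, rmorph_nat) !pinv3_map. Qed.

Lemma covw_map v w M : (covw v w M)^f = covw v^f w^f M^f.
Proof. by rewrite /covw map_mxB !map_mxZ !dot_map !map_mxM. Qed.

Lemma covv_map v w M : (covv v w M)^f = covv v^f w^f M^f.
Proof. by rewrite /covv map_mxB !map_mxZ !dot_map !map_mxM map_trmx. Qed.

End RingMorphism.

Section OrthogonalGeometry.
Variable F : fieldType.

Lemma householder_orth (u : 'cV[F]_3) k : k * dot u u = 2%:R ->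
  (1%:M - k *: (u *m u^T))^T *m (1%:M - k *: (u *m u^T)) = 1%:M.
Proof.
move/eqP; rewrite -subr_eq0 dotE => /eqP ku2.
apply/matrixP => i j; apply: (eq_of_subr_mul (c := k * u i 0 * u j 0) _ ku2).
by move: i j; apply: ord3_ind; apply: ord3_ind; mx3E; ring.
Qed.

Lemma reflect_to_axis (v : 'cV[F]_3) t : t != 0 -> v 2 0 != t -> dot v v = t ^+ 2 ->
  exists2 g, g^T *m g = 1%:M & g *m v = cv3 0 0 t.
Proof.
move=> t0 vt /eqP; rewrite -subr_eq0 dotE => /eqP vv.
have tv0 : t - v 2 0 != 0 by rewrite subr_eq0 eq_sym.
pose u := v - cv3 0 0 t; pose k := (t * (t - v 2 0))^-1.
exists (1%:M - k *: (u *m u^T)).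
  apply: householder_orth; apply: (eq_of_subr_mul (c := k) _ vv).
  by rewrite /u /k; mx3E; field; rewrite t0 tv0.
apply/matrixP => i j; apply: (eq_of_subr_mul (c := - k * u i 0) _ vv).
by move: i j; apply: ord3_ind; apply: ord1_ind; rewrite /u /k; mx3E; field; rewrite t0 tv0.
Qed.

Lemma plane_rotation_between (u0 u1 v0 v1 : F) :
  u0 ^+ 2 + u1 ^+ 2 = v0 ^+ 2 + v1 ^+ 2 -> u0 ^+ 2 + u1 ^+ 2 != 0 ->
  exists p q, [/\ p ^+ 2 + q ^+ 2 = 1, p * u0 - q * u1 = v0 & q * u0 + p * u1 = v1].
Proof.
move=> /esym/eqP; rewrite -subr_eq0 => /eqP uv nu.
exists ((u0 * v0 + u1 * v1) / (u0 ^+ 2 + u1 ^+ 2)),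
       ((u0 * v1 - u1 * v0) / (u0 ^+ 2 + u1 ^+ 2)).
split; [apply: (eq_of_subr_mul (c := (u0 ^+ 2 + u1 ^+ 2)^-1) _ uv) | |]; by field.
Qed.

End OrthogonalGeometry.

Lemma poly_eq0_off_root (F : numDomainType) (p q : {poly F}) :
  q != 0 -> (forall t, ~~ root q t -> p.[t] = 0) -> p = 0.
Proof.
move=> q0 pq; suff /eqP : p * q = 0 by rewrite mulf_eq0 (negbTE q0) orbF => /eqP.
apply: (@roots_geq_poly_eq0 _ _ [seq i%:R | i <- iota 0 (size (p * q))]).
- apply/allP => _ /mapP [i _ ->]; rewrite rootE hornerM.
  by have [/rootP ->|/pq ->] := boolP (root q i%:R); rewrite ?mulr0 ?mul0r.
- by rewrite map_inj_uniq ?iota_uniq // => m n /eqP; rewrite eqr_nat => /eqP.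
- by rewrite size_map size_iota.
Qed.

Lemma meval_line_poly n (F : comNzRingType) (p : {mpoly F[n]}) (a b : 'I_n -> F) :
  exists P : {poly F}, forall t, P.[t] = meval (fun i => a i + t * b i) p.
Proof.
exists (mmap polyC (fun i => (a i)%:P + (b i)%:P * 'X) p) => t.
rewrite /mmap mevalE horner_sum; apply: eq_bigr => m _.
rewrite hornerM hornerC /mmap1 horner_prod; congr (_ * _); apply: eq_bigr => i _.
by rewrite horner_exp hornerD hornerC hornerCM hornerX mulrC.
Qed.

Section Orbits.
Variable R : realType.
Local Notation C := (complex R).
Implicit Types (g h : 'M[C]_3 * 'M[C]_3) (x y z : pt R).

Lemma plane_rotation_sqrt (p q : C) : p ^+ 2 + q ^+ 2 = 1 ->
  exists a b, [/\ a ^+ 2 + b ^+ 2 = 1, a ^+ 2 - b ^+ 2 = p & 2%:R * a * b = q].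
Proof.
move/eqP; rewrite -subr_eq0 => /eqP pq.
have [p_1|p_1] := eqVneq p (-1).
  have /eqP : q ^+ 2 = 0 by apply: (eq_of_subr_mul (c := 1) _ pq); rewrite p_1; ring.
  rewrite expf_eq0 /= => /eqP ->.
  by exists 0, 1; rewrite p_1; split; ring.
have p1 : 1 + p != 0 by rewrite addrC -(subr_eq0 p (-1)) opprK in p_1 *.
have two0 : (2%:R : C) != 0 by rewrite pnatr_eq0.
pose a := sqrtc ((1 + p) / 2%:R).
have a2 : a ^+ 2 = (1 + p) / 2%:R by rewrite sqr_sqrtc.
exists a, (q * a / (1 + p)).
have -> : (q * a / (1 + p)) ^+ 2 = q ^+ 2 * a ^+ 2 / (1 + p) ^+ 2 by rewrite !exprMn exprVn.
have -> : 2%:R * a * (q * a / (1 + p)) = 2%:R * q * a ^+ 2 / (1 + p) by rewrite expr2; field.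
rewrite a2; split.
- by apply: (eq_of_subr_mul (c := (2%:R * (1 + p))^-1) _ pq); field; rewrite ?p1 ?two0.
- by apply: (eq_of_subr_mul (c := - (2%:R * (1 + p))^-1) _ pq); field; rewrite ?p1 ?two0.
- by field; rewrite ?p1 ?two0.
Qed.

Lemma orth_det (g : 'M[C]_3) : g^T *m g = 1%:M -> \det g = 1 \/ \det g = -1.
Proof.
move=> gTg; have : \det g ^+ 2 == 1 by rewrite expr2 -{1}det_tr -det_mulmx gTg det1.
by rewrite sqrf_eq1 => /orP [/eqP|/eqP]; [left|right].
Qed.

Lemma normalize_vec (v : 'cV[C]_3) s : s != 0 -> dot v v = s ^+ 2 ->
  exists2 g, SO3 g & g *m v = cv3 0 0 s.
Proof.
move=> s0 vv.
have [eps eps1 [g gO gv]] : exists2 eps : C, eps = 1 \/ eps = -1 &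
    exists2 g, g^T *m g = 1%:M & g *m v = cv3 0 0 (eps * s).
  have [vs|vs] := eqVneq (v 2 0) s; last first.
    by exists 1; [left | rewrite mul1r; apply: reflect_to_axis].
  exists (-1); [by right | rewrite mulN1r; apply: reflect_to_axis; rewrite ?sqrrN //].
  - by rewrite oppr_eq0.
  - by rewrite vs -addr_eq0 -mulr2n mulrn_eq0 (negbTE s0).
(* [D] corrects the sign of the third coordinate and the determinant. *)
pose D := mk3 (\det g * eps) 0 0 0 1 0 0 0 eps.
have DTD : D^T *m D = 1%:M.
  by rewrite /D; case: eps1 (orth_det gO) => -> [] ->; mx3_entrywise; mx3E; ring.
exists (D *m g); first split.
- by rewrite trmx_mul -mulmxA (mulmxA D^T) DTD mul1mx.
- by rewrite det_mulmx /D; case: eps1 (orth_det gO) => -> [] ->; mx3E; ring.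
- by rewrite -mulmxA gv /D; case: eps1 => ->; mx3_entrywise; mx3E; ring.
Qed.

Lemma SO3_inv (g : 'M[C]_3) : SO3 g -> invmx g = g^T.
Proof.
case=> gTg dg; have gu : g \in unitmx by rewrite unitmxE dg unitr1.
by rewrite -[invmx g]mul1mx -gTg -mulmxA mulmxV // mulmx1.
Qed.

Lemma SO3_mul (g h : 'M[C]_3) : SO3 g -> SO3 h -> SO3 (g *m h).
Proof.
move=> [gTg dg] [hTh dh]; split; last by rewrite det_mulmx dg dh mulr1.
by rewrite trmx_mul -mulmxA (mulmxA g^T) gTg mul1mx hTh.
Qed.

Lemma SO3_tr (g : 'M[C]_3) : SO3 g -> SO3 g^T.
Proof. by case=> gTg dg; split; [rewrite trmxK mulmx1C | rewrite det_tr]. Qed.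

Lemma actE g x : inG g -> act g x = (g.1 *m pv x, g.2 *m pw x, g.2 *m pC x *m g.1^T).
Proof. by case=> g1 _; rewrite /act SO3_inv. Qed.

Lemma act_mul g h x : inG g -> inG h ->
  act g (act h x) = act (g.1 *m h.1, g.2 *m h.2) x.
Proof.
move=> [g1 g2] [h1 h2]; have gh : inG (g.1 *m h.1, g.2 *m h.2) by split; apply: SO3_mul.
by rewrite !actE //= !mulmxA trmx_mul !mulmxA.
Qed.

Definition same_orbit x y := exists2 g, inG g & act g x = y.

Lemma same_orbit_sym x y : same_orbit x y -> same_orbit y x.
Proof.
case=> g Gg <-; have GgT : inG (g.1^T, g.2^T) by case: Gg; split; apply: SO3_tr.
exists (g.1^T, g.2^T) => //; rewrite act_mul //.
case: Gg => [[-> _] [-> _]]; rewrite /act invmx1 !mul1mx mulmx1; by case: x => [[]].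
Qed.

Lemma same_orbit_trans x y z : same_orbit x y -> same_orbit y z -> same_orbit x z.
Proof.
move=> [g Gg <-] [h Gh <-]; exists (h.1 *m g.1, h.2 *m g.2); last by rewrite act_mul.
by case: Gg Gh => ? ? [? ?]; split; apply: SO3_mul.
Qed.

Lemma pinvE i x : pinv i x = pinv3 i (pv x) (pw x) (pC x).
Proof. by []. Qed.

Lemma pinv_act g x i : inG g -> pinv i (act g x) = pinv i x.
Proof.
move=> Gg; rewrite !pinvE actE //; case: Gg => [[g1O d1] [g2O d2]].
rewrite /pinv3 /pv /pw /pC /=; case: (val i) => [|[|[|[|?]]]].
- exact: dot_orth.
- exact: dot_orth.
- by rewrite -!mulmxA (mulmxA g.1^T) g1O mul1mx dot_orth.
- rewrite !trmx_mul trmxK !mulmxA -(mulmxA _ g.2^T) g2O mulmx1 mxtrace_mulC.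
  by rewrite !mulmxA g1O mul1mx.
- by rewrite (det_mulmx (g.2 *m x.2)) det_mulmx det_tr d1 d2 mul1r mulr1.
Qed.

Lemma pinv_same_orbit x y i : same_orbit x y -> pinv i x = pinv i y.
Proof. by case=> g Gg <-; rewrite pinv_act. Qed.

End Orbits.

Section NormalForms.
Variable R : realType.
Local Notation C := (complex R).
Implicit Types (g : 'M[C]_3 * 'M[C]_3) (x y : pt R).

Lemma pt_eta x : x = (pv x, pw x, pC x).
Proof. by case: x => [[]]. Qed.

Definition disc_pt x := disc (pv x) (pw x) (pC x).

Lemma disc_ptE x : disc_pt x = disc_of (fun i => pinv i x).
Proof. by []. Qed.

Lemma disc_pt_pinv x y : (forall i, pinv i x = pinv i y) -> disc_pt x = disc_pt y.
Proof. by move=> xy; rewrite !disc_ptE /disc_of !xy. Qed.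

Lemma disc_pt_act g x : inG g -> disc_pt (act g x) = disc_pt x.
Proof. by move=> Gg; apply: disc_pt_pinv => i; apply: pinv_act. Qed.

Lemma disc_pt_neq0 x : disc_pt x != 0 -> pinv 0 x != 0 /\ pinv 1 x != 0.
Proof.
by rewrite disc_ptE /disc_of /= => dx; split; apply: contraNneq dx => ->; apply/eqP; ring.
Qed.

Definition cov_vanish x :=
  covw (pv x) (pw x) (pC x) = 0 /\ covv (pv x) (pw x) (pC x) = 0.

Lemma cov_vanish_act g x : inG g -> cov_vanish x -> cov_vanish (act g x).
Proof.
move=> Gg [cw cv]; rewrite actE //; case: Gg => [[g1O _] [g2O _]].
by rewrite /cov_vanish /= covw_orth // covv_orth // cw cv !mulmx0.
Qed.

(* X-states in conformal coordinates: the upper 2x2 block of C is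
   a I + b J + c K + d K J with J = [[0, -1], [1, 0]] and K = diag(1, -1). *)
Definition nf (s r a b c d e : C) : pt R :=
  (cv3 0 0 s, cv3 0 0 r, mk3 (a + c) (d - b) 0 (b + d) (a - c) 0 0 0 e).

Lemma X0_nf s r a b c d e : X0 (nf s r a b c d e).
Proof.
rewrite /X0 /pv /pw /pC /=; do !split; try by mx3E.
by apply: ord3_ind; apply: ord3_ind; mx3E.
Qed.

Lemma cov_vanish_nf s r a b c d e : cov_vanish (nf s r a b c d e).
Proof. by split; mx3_entrywise; rewrite /covw /covv; mx3E; ring. Qed.

Lemma block_nf s r (M : 'M[C]_3) : M 0 2 = 0 -> M 1 2 = 0 -> M 2 0 = 0 -> M 2 1 = 0 ->
  (cv3 0 0 s, cv3 0 0 r, M) =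
  nf s r ((M 0 0 + M 1 1) / 2%:R) ((M 1 0 - M 0 1) / 2%:R)
         ((M 0 0 - M 1 1) / 2%:R) ((M 1 0 + M 0 1) / 2%:R) (M 2 2).
Proof.
have two0 : (2%:R : C) != 0 by rewrite pnatr_eq0.
move=> M02 M12 M20 M21; congr (_, _, _); mx3_entrywise; mx3E; rewrite ?M02 ?M12 ?M20 ?M21 //.
all: by field.
Qed.

Lemma X0_nfP x : X0 x -> exists s r a b c d e, x = nf s r a b c d e.
Proof.
move=> [v0 [v1 [w0 [w1 M0]]]].
have -> : x = (cv3 0 0 (pv x 2 0), cv3 0 0 (pw x 2 0), pC x).
  by rewrite {1}(pt_eta x); congr (_, _, _); mx3_entrywise; mx3E; rewrite ?v0 ?v1 ?w0 ?w1.
by rewrite block_nf ?(M0 2 0) ?(M0 2 1) ?(M0 0 2) ?(M0 1 2) //; do 7!eexists.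
Qed.

Lemma pinv_nf s r a b c d e (A := a ^+ 2 + b ^+ 2) (B := c ^+ 2 + d ^+ 2) :
  [/\ pinv 0 (nf s r a b c d e) = s ^+ 2, pinv 1 (nf s r a b c d e) = r ^+ 2,
      pinv 2 (nf s r a b c d e) = s * r * e,
      pinv 3 (nf s r a b c d e) = 2%:R * (A + B) + e ^+ 2
    & pinv 4 (nf s r a b c d e) = e * (A - B)].
Proof. by rewrite /A /B; split; rewrite pinvE /pinv3 /=; mx3E; ring. Qed.

Lemma disc_nf s r a b c d e : disc_pt (nf s r a b c d e) =
  16%:R * e ^+ 3 * (s * r) ^+ 9 * (a ^+ 2 + b ^+ 2) * (c ^+ 2 + d ^+ 2).
Proof.
have [p0 p1 p2 p3 p4] := pinv_nf s r a b c d e.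
by rewrite disc_ptE /disc_of /= p0 p1 p2 p3 p4; ring.
Qed.

Lemma cov_vanish_block s r (M : 'M[C]_3) : s != 0 -> r != 0 ->
  cov_vanish (cv3 0 0 s, cv3 0 0 r, M) -> [/\ M 0 2 = 0, M 1 2 = 0, M 2 0 = 0 & M 2 1 = 0].
Proof.
move=> s0 r0 [/matrixP cw /matrixP cv].
have rrs : r * r * s != 0 by rewrite !mulf_neq0.
have ssr : s * s * r != 0 by rewrite !mulf_neq0.
have cancel k (m : C) : k != 0 -> m * k = 0 -> m = 0.
  by move=> k0 /eqP; rewrite mulf_eq0 (negbTE k0) orbF => /eqP.
split; [apply: (cancel _ _ rrs) | apply: (cancel _ _ rrs)
       | apply: (cancel _ _ ssr) | apply: (cancel _ _ ssr)].
- by move: (cw 0 0); rewrite /covw /=; mx3E; move=> <-; ring.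
- by move: (cw 1 0); rewrite /covw /=; mx3E; move=> <-; ring.
- by move: (cv 0 0); rewrite /covv /=; mx3E; move=> <-; ring.
- by move: (cv 1 0); rewrite /covv /=; mx3E; move=> <-; ring.
Qed.

Lemma cov_vanish_same_orbit_nf x : cov_vanish x -> pinv 0 x != 0 -> pinv 1 x != 0 ->
  exists a b c d e, same_orbit x (nf (sqrtc (pinv 0 x)) (sqrtc (pinv 1 x)) a b c d e).
Proof.
move=> cx v0 w0; set s := sqrtc _; set r := sqrtc _.
have s0 : s != 0 by rewrite sqrtc_eq0.
have r0 : r != 0 by rewrite sqrtc_eq0.
have [g1 g1S g1v] := normalize_vec s0 (esym (sqr_sqrtc _)).
have [g2 g2S g2w] := normalize_vec r0 (esym (sqr_sqrtc _)).
have Gg : inG (g1, g2) by [].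
have := cov_vanish_act Gg cx; rewrite actE //= g1v g2w => /cov_vanish_block.
case/(_ s0 r0) => M02 M12 M20 M21.
do 5!eexists; exists (g1, g2) => //.
by rewrite actE //= g1v g2w block_nf.
Qed.

Definition rot3 (p q : C) : 'M[C]_3 := mk3 p (- q) 0 q p 0 0 0 1.

Lemma SO3_rot3 p q : p ^+ 2 + q ^+ 2 = 1 -> SO3 (rot3 p q).
Proof.
move/eqP; rewrite -subr_eq0 => /eqP pq.
split; [mx3_entrywise|]; rewrite /rot3; mx3E;
  first [ring | by apply: (eq_of_subr_mul (c := 1) _ pq); ring].
Qed.

(* With (pa, qa) = (cos, sin) theta_v and (pb, qb) = (cos, sin) theta_w, the
   pair (a, b) turns by theta_w - theta_v and (c, d) by theta_w + theta_v. *)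
Lemma act_rot3_nf pa qa pb qb s r a b c d e :
  pa ^+ 2 + qa ^+ 2 = 1 -> pb ^+ 2 + qb ^+ 2 = 1 ->
  act (rot3 pa qa, rot3 pb qb) (nf s r a b c d e) =
  nf s r ((pb * pa + qb * qa) * a - (qb * pa - pb * qa) * b)
         ((qb * pa - pb * qa) * a + (pb * pa + qb * qa) * b)
         ((pb * pa - qb * qa) * c - (qb * pa + pb * qa) * d)
         ((qb * pa + pb * qa) * c + (pb * pa - qb * qa) * d) e.
Proof.
move=> na nb; rewrite actE; last by split; apply: SO3_rot3.
by congr (_, _, _); mx3_entrywise; rewrite /rot3; mx3E; ring.
Qed.

Lemma nf_same_orbit (s r a b c d e a' b' c' d' : C) :
  a ^+ 2 + b ^+ 2 = a' ^+ 2 + b' ^+ 2 -> a ^+ 2 + b ^+ 2 != 0 ->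
  c ^+ 2 + d ^+ 2 = c' ^+ 2 + d' ^+ 2 -> c ^+ 2 + d ^+ 2 != 0 ->
  same_orbit (nf s r a b c d e) (nf s r a' b' c' d' e).
Proof.
move=> ab ab0 cd cd0.
have [pf [qf [nf1 fa fb]]] := plane_rotation_between ab ab0.
have [ps [qs [ns1 sc sd]]] := plane_rotation_between cd cd0.
(* theta_w is half the sum of the two required angles, theta_v is theta_w
   minus the first one. *)
have nfs : (pf * ps - qf * qs) ^+ 2 + (pf * qs + qf * ps) ^+ 2 = 1.
  by rewrite -[RHS]mulr1 -{1}nf1 -ns1; ring.
have [pb [qb [nb1 b_re b_im]]] := plane_rotation_sqrt nfs.
pose pa := ps * pb + qs * qb; pose qa := qs * pb - ps * qb.
have na1 : pa ^+ 2 + qa ^+ 2 = 1 by rewrite -[RHS]mulr1 -{1}ns1 -nb1 /pa /qa; ring.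
have Pf : pb * pa + qb * qa = pf.
  transitivity (ps * (pb ^+ 2 - qb ^+ 2) + qs * (2%:R * pb * qb)).
    by rewrite /pa /qa; ring.
  by rewrite b_re b_im -[RHS]mulr1 -ns1; ring.
have Qf : qb * pa - pb * qa = qf.
  transitivity (ps * (2%:R * pb * qb) - qs * (pb ^+ 2 - qb ^+ 2)).
    by rewrite /pa /qa; ring.
  by rewrite b_re b_im -[RHS]mulr1 -ns1; ring.
have Ps : pb * pa - qb * qa = ps by rewrite -[RHS]mulr1 -nb1 /pa /qa; ring.
have Qs : qb * pa + pb * qa = qs by rewrite -[RHS]mulr1 -nb1 /pa /qa; ring.
exists (rot3 pa qa, rot3 pb qb); first by split; apply: SO3_rot3.
by rewrite act_rot3_nf // Pf Qf Ps Qs fa fb sc sd.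
Qed.

Lemma nf_separate (s r a b c d e a' b' c' d' e' : C) :
  (forall i, pinv i (nf s r a b c d e) = pinv i (nf s r a' b' c' d' e')) ->
  disc_pt (nf s r a b c d e) != 0 ->
  same_orbit (nf s r a b c d e) (nf s r a' b' c' d' e').
Proof.
move=> eq_pinv; rewrite disc_nf => disc0.
have [e0 sr0 ab0 cd0] :
    [/\ e != 0, s * r != 0, a ^+ 2 + b ^+ 2 != 0 & c ^+ 2 + d ^+ 2 != 0].
  by split; apply: contraNneq disc0 => ->; apply/eqP; ring.
have [_ _ p2 p3 p4] := pinv_nf s r a b c d e.
have [_ _ p2' p3' p4'] := pinv_nf s r a' b' c' d' e'.
have ee' : e = e' by apply: (mulfI sr0); rewrite -p2 -p2' eq_pinv.
subst e'.
set A := a ^+ 2 + b ^+ 2 in p3 p4 ab0 *; set B := c ^+ 2 + d ^+ 2 in p3 p4 cd0 *.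
set A' := a' ^+ 2 + b' ^+ 2 in p3' p4' *; set B' := c' ^+ 2 + d' ^+ 2 in p3' p4' *.
have two0 : (2%:R : C) != 0 by rewrite pnatr_eq0.
have sumAB : A + B = A' + B'.
  by apply: (mulfI two0); apply: (addIr (e ^+ 2)); rewrite -p3 -p3' eq_pinv.
have difAB : A - B = A' - B' by apply: (mulfI e0); rewrite -p4 -p4' eq_pinv.
apply: nf_same_orbit => //; apply: (mulfI two0).
- transitivity ((A + B) + (A - B)); first by rewrite /A /B; ring.
  by rewrite sumAB difAB /A' /B'; ring.
- transitivity ((A + B) - (A - B)); first by rewrite /A /B; ring.
  by rewrite sumAB difAB /A' /B'; ring.
Qed.

Lemma same_orbit_of_pinv x1 x2 : cov_vanish x1 -> cov_vanish x2 -> disc_pt x1 != 0 ->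
  (forall i, pinv i x1 = pinv i x2) -> same_orbit x1 x2.
Proof.
move=> c1 c2 d1 eq12; have d2 : disc_pt x2 != 0 by rewrite -(disc_pt_pinv eq12).
have [[v1 w1] [v2 w2]] := (disc_pt_neq0 d1, disc_pt_neq0 d2).
have [a [b [c [d [e o1]]]]] := cov_vanish_same_orbit_nf c1 v1 w1.
have [a' [b' [c' [d' [e' o2]]]]] := cov_vanish_same_orbit_nf c2 v2 w2.
rewrite -(eq12 0) -(eq12 1) in o2.
apply: (same_orbit_trans o1); apply: (same_orbit_trans _ (same_orbit_sym o2)).
apply: nf_separate => [i|].
  by rewrite -(pinv_same_orbit i o1) -(pinv_same_orbit i o2).
by rewrite -(disc_pt_pinv (fun i => pinv_same_orbit i o1)).
Qed.

End NormalForms.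

Section Zariski.
Variable R : realType.
Local Notation C := (complex R).
Implicit Types (g : 'M[C]_3 * 'M[C]_3) (x y : pt R).

Definition gen_v : 'cV[{mpoly C[15]}]_3 := \col_i 'X_(inord i).
Definition gen_w : 'cV[{mpoly C[15]}]_3 := \col_i 'X_(inord (3 + i)).
Definition gen_C : 'M[{mpoly C[15]}]_3 := \matrix_(b, a) 'X_(inord (6 + 3 * b + a)).

Lemma meval_gen_v x : map_mx (meval (coords x)) gen_v = pv x.
Proof.
apply/matrixP=> i j; rewrite !mxE mevalXU /coords inordK; last exact: ltn_trans (ltn_ord i) _.
by rewrite ltn_ord inord_val (ord1 j).
Qed.

Lemma meval_gen_w x : map_mx (meval (coords x)) gen_w = pw x.
Proof.
apply/matrixP=> i j; rewrite !mxE mevalXU /coords inordK; last by case: i => [[|[|[|]]]].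
by rewrite ltnNge leq_addr /= ltn_add2l ltn_ord addKn inord_val (ord1 j).
Qed.

Lemma meval_gen_C x : map_mx (meval (coords x)) gen_C = pC x.
Proof.
mx3_entrywise; rewrite !mxE mevalXU /coords inordK //=.
all: by congr (pC x _ _); apply: val_inj; rewrite /= inordK.
Qed.

Lemma zariski_closed_zeros (I : Type) (P : I -> {mpoly C[15]}) (Z : pt R -> Prop) :
  (forall x, Z x <-> forall i, meval (coords x) (P i) = 0) -> zariski_closed Z.
Proof.
move=> ZP; exists (fun p => exists i, p = P i) => x; rewrite ZP.
by split=> [P0 _ [i ->] | P0 i]; [exact: P0 | apply: P0; exists i].
Qed.

Lemma zariski_closed_disc_eq0 : zariski_closed (fun x => disc_pt x = 0).
Proof.
apply: (@zariski_closed_zeros unit (fun _ => disc gen_v gen_w gen_C)) => x.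
rewrite disc_map meval_gen_v meval_gen_w meval_gen_C.
by split=> [dx _ | /(_ tt)].
Qed.

Lemma zariski_closed_cov_vanish : zariski_closed (@cov_vanish R).
Proof.
apply: (@zariski_closed_zeros _ (fun bk : bool * 'I_3 =>
  (if bk.1 then covw gen_v gen_w gen_C else covv gen_v gen_w gen_C) bk.2 0)) => x.
have evalE (M : 'cV[{mpoly C[15]}]_3) k :
  meval (coords x) (M k 0) = map_mx (meval (coords x)) M k 0 by rewrite mxE.
have evw k : meval (coords x) (covw gen_v gen_w gen_C k 0) = covw (pv x) (pw x) (pC x) k 0.
  by rewrite evalE covw_map meval_gen_v meval_gen_w meval_gen_C.
have evv k : meval (coords x) (covv gen_v gen_w gen_C k 0) = covv (pv x) (pw x) (pC x) k 0.
  by rewrite evalE covv_map meval_gen_v meval_gen_w meval_gen_C.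
split=> [[cw cv] [[] k] | cov0] /=; [by rewrite evw cw mxE | by rewrite evv cv mxE |].
split; apply/matrixP=> k j; rewrite (ord1 j) [RHS]mxE; [rewrite -evw | rewrite -evv].
  exact: (cov0 (true, k)).
exact: (cov0 (false, k)).
Qed.

Lemma X2_act_X0 g x : inG g -> X0 x -> X2 (act g x).
Proof. by move=> Gg X0x Z _ SZ; apply: SZ; exists g, x. Qed.

Lemma X2_cov_vanish x : X2 x -> cov_vanish x.
Proof.
move=> X2x; apply: X2x; first exact: zariski_closed_cov_vanish.
move=> _ [g [x0 [Gg [X0x0 ->]]]]; apply: cov_vanish_act Gg _.
by have [s [r [a [b [c [d [e ->]]]]]]] := X0_nfP X0x0; apply: cov_vanish_nf.
Qed.

Lemma coords_line x u t i : coords (x + t *: u) i = coords x i + t * coords u i.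
Proof. by rewrite /coords; case: ifP => _; [|case: ifP => _]; rewrite !mxE. Qed.

Lemma act_line g x u t : act g (x + t *: u) = act g x + t *: act g u.
Proof.
by rewrite /act; congr (_, _, _) => /=; rewrite ?mulmxDr ?mulmxDl -?scalemxAr -?scalemxAl.
Qed.

Lemma nf_line (s r a b c d e t : C) :
  nf (s + t) (r + t) (a + t) b (c + t) d (e + t) = nf s r a b c d e + t *: nf 1 1 1 0 1 0 1.
Proof. by rewrite /nf; congr (_, _, _) => /=; mx3_entrywise; mx3E; ring. Qed.

(* A product of monic linear factors, hence visibly nonzero. *)
Definition disc_line_poly (s r a b c d e : C) : {poly C} :=
  16%:R%:P * ('X + e%:P) ^+ 3 * (('X + s%:P) * ('X + r%:P)) ^+ 9 *
  (('X + (a + 'i * b)%:P) * ('X + (a - 'i * b)%:P)) *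
  (('X + (c + 'i * d)%:P) * ('X + (c - 'i * d)%:P)).

Lemma disc_line_poly_neq0 (s r a b c d e : C) : disc_line_poly s r a b c d e != 0.
Proof.
by rewrite !mulf_neq0 ?expf_neq0 ?polyC_eq0 ?pnatr_eq0 ?monic_neq0 ?monicXaddC.
Qed.

Lemma horner_disc_line (s r a b c d e t : C) :
  (disc_line_poly s r a b c d e).[t] =
  disc_pt (nf (s + t) (r + t) (a + t) b (c + t) d (e + t)).
Proof.
have sum_sq (p q : C) : (t + (p + 'i * q)) * (t + (p - 'i * q)) = (p + t) ^+ 2 + q ^+ 2.
  by transitivity ((p + t) ^+ 2 - 'i ^+ 2 * q ^+ 2); [ring | rewrite sqr_i; ring].
by rewrite disc_nf !(hornerM, hornerD, hornerX, hornerC, horner_exp) !sum_sq; ring.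
Qed.

Lemma X2_sub_closure_disc_neq0 x :
  X2 x -> zclosure (fun y => X2 y /\ ~ disc_pt y = 0) x.
Proof.
move=> X2x W [P WP] W_U; apply: X2x; first by exists P.
move=> _ [g [x0 [Gg [X0x0 ->]]]]; have [s [r [a [b [c [d [e ->]]]]]]] := X0_nfP X0x0.
apply/WP => p Pp.
pose y := act g (nf s r a b c d e); pose u := act g (nf 1 1 1 0 1 0 1).
have [F Ft] := meval_line_poly p (coords y) (coords u).
suff F0 : F = 0.
  rewrite (meval_eq p (v2 := fun i => coords y i + 0 * coords u i)) -?Ft ?F0 ?horner0 //.
  by move=> i; rewrite mul0r addr0.
apply: (poly_eq0_off_root (disc_line_poly_neq0 s r a b c d e)) => t Qt.
transitivity (meval (fun i => coords y i + t * coords u i) p); first exact: Ft.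
rewrite -(meval_eq p (coords_line y u t)) /y /u -act_line -nf_line.
apply: ((WP _).1 _ p Pp); apply: W_U; split; first exact: X2_act_X0 Gg (X0_nf _ _ _ _ _ _ _).
by rewrite disc_pt_act // -horner_disc_line => /rootP; apply/negP.
Qed.

End Zariski.

Theorem propositionB6 (R : realType) :
  G_invariant_on (@pinv R) (@X2 R) /\ separates_orbits_gp (@pinv R) (@X2 R).
Proof.
split; first by move=> g x i Gg _; apply: pinv_act.
exists (fun y => disc_pt y = 0); split; first exact: zariski_closed_disc_eq0.
split; first exact: X2_sub_closure_disc_neq0.
move=> x1 x2 X1 /eqP d1 X2' _ eq12.
have [g Gg <-] := same_orbit_of_pinv (X2_cov_vanish X1) (X2_cov_vanish X2') d1 eq12.
by exists g.
Qed.
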